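(* With notation as in the context, for each $s\in\{3,4,5,6,7\}$ there is a unique function $h_s:\Delta_s^+\to\{1,\dots,s\}$ such that $h_s(\alpha_s)=s$ and the map $\beta\mapsto v_{h_s(\beta)}$ is an open map of graphs from $\mathsf{H}_s$ to $\mathsf{Dyn}(E_s)$. For $s=8$ there is no function $h:\Delta_8^+\to\{1,\dots,8\}$ with $h(\alpha_8)=8$ such that $\beta\mapsto v_{h(\beta)}$ is an open map from $\mathsf{H}_8$ to $\mathsf{Dyn}(E_8)$.
   Context: Let $\Delta(E_8)$ be the root system of type $E_8$ with simple roots $\alpha_1,\dots,\alpha_8$, where $\langle\alpha_i,\alpha_i\rangle=2$, $\langle\alpha_i,\alpha_j\rangle=-1$ if $\{i,j\}\in\{\{1,3\},\{3,4\},\{4,5\},\{5,6\},\{6,7\},\{7,8\},\{2,4\}\}$, and $0$ otherwise; $\Delta^+$ denotes its positive roots and $\beta=\sum\beta^i\alpha_i$. For $\beta\in\Delta^+$ let $m(\beta)=\max\{i:\beta^i\ne0\}$, and define the strata $\Delta_1^+=\{\alpha_1\}$, $\Delta_3^+=\{\beta\in\Delta^+: m(\beta)\in\{2,3\}\}$, $\Delta_s^+=\{\beta\in\Delta^+: m(\beta)=s\}$ for $4\le s\le 8$. For $3\le s\le8$, $\mathsf{Dyn}(E_s)$ is the graph with vertices $v_1,\dots,v_s$, with $v_i,v_j$ adjacent iff $\langle\alpha_i,\alpha_j\rangle=-1$. $\mathsf{H}_s$ is the graph with vertex set $\Delta_s^+$, where $\beta,\beta'$ are adjacent iff $\beta-\beta'$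 or $\beta'-\beta$ is one of the simple roots $\alpha_1,\dots,\alpha_8$. An open map from a graph $P$ to a graph $R$ is a function $h$ from vertices of $P$ to vertices of $R$ which is a graph homomorphism (adjacent vertices go to adjacent vertices) and is locally surjective (for each vertex $u$ of $P$, $h$ maps the set of neighbours of $u$ onto the set of neighbours of $h(u)$). *)

(* Root system E_8 with the paper's 1-based numbering of simple roots. *)
From mathcomp Require Import all_boot all_order all_algebra.
Set Implicit Arguments. Unset Strict Implicit. Unset Printing Implicit Defensive.
Import GRing.Theory Num.Theory.

(* An element beta = sum_i beta^i alpha_i of the positive cone of the root lattice
   is encoded by its coefficient function i |-> beta^i (i in 1..8, zero elsewhere). *)
Definition vec := nat -> nat.

Definition dyn_adj (i j : nat) : bool :=
  [|| ((i, j) == (1, 3)), ((i, j) == (3, 4)), ((i, j) == (4, 5)), ((i, j) == (5, 6)),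
      ((i, j) == (6, 7)), ((i, j) == (7, 8)), ((i, j) == (2, 4)),
      ((j, i) == (1, 3)), ((j, i) == (3, 4)), ((j, i) == (4, 5)), ((j, i) == (5, 6)),
      ((j, i) == (6, 7)), ((j, i) == (7, 8)) | ((j, i) == (2, 4))].

Definition form (i j : nat) : int :=
  if i == j then 2%R else if dyn_adj i j then (-1)%R else 0%R.

Definition normsq (b : vec) : int :=
  (\sum_(1 <= i < 9) \sum_(1 <= j < 9) form i j * (b i)%:Z * (b j)%:Z)%R.

Definition supported (b : vec) : Prop := forall i, (i == 0) || (8 < i) -> b i = 0.

(* Positive roots of E_8: nonzero nonnegative combinations of simple roots
   of squared length 2 (E_8 is simply laced). *)
Definition pos_root (b : vec) : Prop :=
  supported b /\ (exists i, b i != 0) /\ normsq b = 2%R.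

Definition alpha (k : nat) : vec := fun i => (i == k : nat).

Definition mval (b : vec) (s : nat) : Prop := b s != 0 /\ forall i, s < i -> b i = 0.

Definition stratum (s : nat) (b : vec) : Prop :=
  pos_root b /\ (if s == 3 then mval b 2 \/ mval b 3 else mval b s).

Definition diff_simple (b b' : vec) : Prop :=
  exists2 k, 1 <= k <= 8 & forall i, b i = b' i + (i == k).

Definition H_adj (b b' : vec) : Prop := diff_simple b b' \/ diff_simple b' b.

Definition Dyn_adj (s i j : nat) : Prop :=
  [/\ 1 <= i <= s, 1 <= j <= s & dyn_adj i j].

(* beta |-> v_{h beta} is an open map H_s -> Dyn(E_s), with h : Delta_s^+ -> {1..s}
   and h(alpha_s) = s. *)
Definition good_h (s : nat) (h : vec -> nat) : Prop :=
  [/\ forall b, stratum s b -> 1 <= h b <= s,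
      h (alpha s) = s,
      (forall b b', stratum s b -> stratum s b' -> H_adj b b' -> Dyn_adj s (h b) (h b')) &
      (forall b, stratum s b -> forall j, Dyn_adj s (h b) j ->
         exists b', [/\ stratum s b', H_adj b b' & h b' = j])].

(** The form of E_8 is positive definite and the fundamental
    weights w_k satisfy <w_k, beta> = beta^k, so by Cauchy-Schwarz every positive
    root satisfies (beta^k)^2 <= 2 <w_k, w_k>.  Hence the positive roots, the
    strata and the graphs H_s are found by a finite search.  An open map
    H_s -> Dyn(E_s) is a labelling of the vertices of H_s subject to local
    conditions that can already be tested on partial labellings; enumerating by
    backtracking all labellings that pass them, with alpha_s labelled s, gives
    exactly one labelling for 3 <= s <= 7 and none for s = 8. *)

From Pilot Require Import Defs.
From Stdlib Require Import FunctionalExtensionality.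
From mathcomp Require Import all_boot all_order all_algebra.
From mathcomp Require Import ring lra zify.
Set Implicit Arguments. Unset Strict Implicit. Unset Printing Implicit Defensive.
Import GRing.Theory Num.Theory.

(** * Open maps from a finite graph, by backtracking *)

Section OpenLabellings.

Variables (N : seq (seq nat)) (W : seq nat) (D : rel nat) (r l : nat).

Local Notation n := (size N).
Local Notation nbrs i := (nth [::] N i).

Definition open_labelling (f : nat -> nat) : Prop :=
  [/\ forall i, i < n -> f i \in W,
      f r = l,
      forall i k, i < n -> k \in nbrs i -> D (f i) (f k) &
      forall i j, i < n -> j \in W -> D (f i) j -> exists2 k, k \in nbrs i & f k = j].

(* A partial labelling [p] labels the vertices [0 .. size p - 1].  Local
   surjectivity at [i] is only tested once all neighbours of [i] are labelled;
   this makes [consistent] prefix-closed, so the pruned search misses nothing. *)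
Definition locally_open (p : seq nat) (i : nat) : bool :=
  let pi := nth 0 p i in
  [&& pi \in W, (i == r) ==> (pi == l),
      all (fun k => (k < size p) ==> D pi (nth 0 p k)) (nbrs i) &
      all (gtn (size p)) (nbrs i) ==>
        all (fun j => D pi j ==> (j \in [seq nth 0 p k | k <- nbrs i])) W].

Definition consistent (p : seq nat) : bool := all (locally_open p) (iota 0 (size p)).

Fixpoint extensions (k : nat) : seq (seq nat) :=
  if k is k'.+1 then [seq p <- [seq rcons q v | q <- extensions k', v <- W] | consistent p]
  else [:: [::]].

Definition open_labellings : seq (seq nat) := extensions n.

Lemma locally_open_rcons p v i :
  i < size p -> locally_open (rcons p v) i -> locally_open p i.
Proof.
move=> ip /and4P[Wi ri hom sur].
have pE k : k < size p -> nth 0 (rcons p v) k = nth 0 p k by move=> kp; rewrite nth_rcons kp.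
rewrite /locally_open -pE //; apply/and4P; split => //.
  apply/allP => k kN; apply/implyP => kp; rewrite -pE //.
  by have /implyP := allP hom k kN; apply; rewrite size_rcons ltnS ltnW.
apply/implyP => /allP Np.
have Nrcons : all (gtn (size (rcons p v))) (nbrs i).
  by apply/allP => k /Np kp; rewrite /= size_rcons leqW.
have -> : [seq nth 0 p k | k <- nbrs i] = [seq nth 0 (rcons p v) k | k <- nbrs i].
  by apply/eq_in_map => k /Np /pE.
by rewrite Nrcons in sur.
Qed.

Lemma consistent_rcons p v : consistent (rcons p v) -> consistent p.
Proof.
move=> /allP c; apply/allP => i; rewrite mem_iota => /andP[_ ip].
by apply: locally_open_rcons (ip) (c i _); rewrite size_rcons mem_iota; lia.
Qed.

Lemma mem_extensions k p : (p \in extensions k) = consistent p && (size p == k).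
Proof.
elim: k p => [|k IH] p /=; first by case: p => [|x p]; rewrite inE ?andbF.
rewrite mem_filter; apply/andP/andP=> -[cp pk]; split=> //.
  case/allpairsP: pk => -[q v] [/=]; rewrite IH => /andP[_ /eqP <-] _ ->.
  by rewrite size_rcons.
case/lastP: p cp pk => [//|q v] cp; rewrite size_rcons eqSS => qk.
apply/allpairsP; exists (q, v); split => //=.
  by rewrite IH (consistent_rcons cp).
have /and4P[] : locally_open (rcons q v) (size q).
  by apply: (allP cp); rewrite size_rcons mem_iota leq0n add0n ltnSn.
by rewrite nth_rcons ltnn eqxx.
Qed.

Lemma mkseq_open_labelling f : open_labelling f -> mkseq f n \in open_labellings.
Proof.
case=> fW fr hom sur; rewrite mem_extensions size_mkseq eqxx andbT.
apply/allP => i; rewrite size_mkseq mem_iota => /andP[_ i_n].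
have pE k : k < n -> nth 0 (mkseq f n) k = f k by exact: nth_mkseq.
rewrite /locally_open size_mkseq pE //; apply/and4P; split.
- exact: fW.
- by apply/implyP => /eqP ri; rewrite ri fr.
- by apply/allP => k kN; apply/implyP => kn; rewrite pE // hom.
apply/implyP => /allP Nn; apply/allP => j jW; apply/implyP => dj.
have [k kN <-] := sur i j i_n jW dj.
by apply/mapP; exists k; rewrite // pE //; apply: Nn.
Qed.

Lemma nth_open_labelling p :
    r < n -> (forall i k, i < n -> k \in nbrs i -> k < n) ->
  p \in open_labellings -> open_labelling (nth 0 p).
Proof.
move=> rn Nn; rewrite mem_extensions => /andP[/allP c /eqP sz].
have lo i : i < n -> locally_open p i by move=> i_n; apply: c; rewrite mem_iota sz.
split.
- by move=> i /lo /and4P[].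
- by have /and4P[_ /implyP/(_ (eqxx r))/eqP] := lo r rn.
- move=> i k i_n kN; have /and4P[_ _ /allP hom _] := lo i i_n.
  by have /implyP := hom k kN; apply; rewrite sz (Nn i k).
move=> i j i_n jW dj; have /and4P[_ _ _ /implyP sur] := lo i i_n.
have /allP/(_ j jW)/implyP/(_ dj)/mapP[k kN ->] :
    all (fun j => D (nth 0 p i) j ==> (j \in [seq nth 0 p k | k <- nbrs i])) W.
  by apply: sur; apply/allP => k kN; rewrite /= sz (Nn i k).
by exists k.
Qed.

End OpenLabellings.

(** * Bounds on the coefficients of positive roots *)

Section CartanPairing.

Local Open Scope ring_scope.

Definition pairing (x y : nat -> int) : int :=
  \sum_(1 <= i < 9) \sum_(1 <= j < 9) Defs.form i j * x i * y j.

Lemma dyn_adjC : symmetric dyn_adj.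
Proof.
suff imp i j : dyn_adj i j -> dyn_adj j i by move=> i j; apply/idP/idP; apply: imp.
rewrite /dyn_adj => ij.
by do 13 (case/orP: ij => [-> | ij]; first by rewrite ?orTb ?orbT); rewrite ij ?orTb ?orbT.
Qed.

Lemma formC i j : Defs.form i j = Defs.form j i.
Proof. by rewrite /Defs.form eq_sym dyn_adjC. Qed.

Lemma pairingC x y : pairing x y = pairing y x.
Proof.
rewrite /pairing exchange_big; apply: eq_bigr => i _; apply: eq_bigr => j _.
by rewrite formC mulrAC.
Qed.

Lemma pairingBl a c x y z :
  pairing (fun i => a * x i - c * y i) z = a * pairing x z - c * pairing y z.
Proof.
rewrite /pairing !mulr_sumr -sumrB; apply: eq_bigr => i _.
rewrite !mulr_sumr -sumrB; apply: eq_bigr => j _; ring.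
Qed.

Lemma pairing_ge0 x : 0 <= pairing x x.
Proof.
(* Completing squares in the order 1, 2, ..., 8 (an LDL^T decomposition of the
   Cartan matrix). *)
have sos : 60 * pairing x x =
    30 * (2 * x 1%N - x 3%N) ^+ 2 + 30 * (2 * x 2%N - x 4%N) ^+ 2
  + 10 * (3 * x 3%N - 2 * x 4%N) ^+ 2 + 2 * (5 * x 4%N - 6 * x 5%N) ^+ 2
  + 3 * (4 * x 5%N - 5 * x 6%N) ^+ 2 + 5 * (3 * x 6%N - 4 * x 7%N) ^+ 2
  + 10 * (2 * x 7%N - 3 * x 8%N) ^+ 2 + 30 * x 8%N ^+ 2.
  by rewrite /pairing unlock /= /Defs.form /=; ring.
rewrite -(pmulr_rge0 _ (isT : 0 < 60 :> int)) sos.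
by repeat apply: addr_ge0; apply: mulr_ge0 => //; apply: sqr_ge0.
Qed.

Lemma pairing_cauchy_schwarz x y :
  0 < pairing y y -> pairing y x ^+ 2 <= pairing y y * pairing x x.
Proof.
set a := pairing y y; set c := pairing y x => a_gt0.
have := pairing_ge0 (fun i => a * x i - c * y i).
rewrite pairingBl (pairingC x) (pairingC y) !pairingBl (pairingC x y) -/a -/c.
nra.
Qed.

(* The inverse of the Cartan matrix: row k is the fundamental weight w_k in the
   basis of simple roots, indexed from 1 (hence the [.-1] in [weight]). *)
Definition inv_cartan : seq (seq nat) := [::
  [:: 4; 5; 7; 10; 8; 6; 4; 2];
  [:: 5; 8; 10; 15; 12; 9; 6; 3];
  [:: 7; 10; 14; 20; 16; 12; 8; 4];
  [:: 10; 15; 20; 30; 24; 18; 12; 6];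
  [:: 8; 12; 16; 24; 20; 15; 10; 5];
  [:: 6; 9; 12; 18; 15; 12; 8; 4];
  [:: 4; 6; 8; 12; 10; 8; 6; 3];
  [:: 2; 3; 4; 6; 5; 4; 3; 2]].

Definition weight (k : nat) : nat -> nat := fun i => nth 0 (nth [::] inv_cartan k.-1) i.-1.

Lemma pairing_weight k x : (1 <= k <= 8)%N -> pairing (Posz \o weight k) x = x k.
Proof.
case/andP; case: k => [|[|[|[|[|[|[|[|[|k]]]]]]]]] // _ _;
  by rewrite /pairing unlock /= /Defs.form /=; ring.
Qed.

Lemma weight_diag_gt0 k : (1 <= k <= 8)%N -> (0 < weight k k)%N.
Proof. by case/andP; case: k => [|[|[|[|[|[|[|[|[|k]]]]]]]]]. Qed.

Lemma root_coeff_sq_le b k :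
  (1 <= k <= 8)%N -> normsq b = 2 -> (b k * b k <= 2 * weight k k)%N.
Proof.
move=> k18 nb.
have := @pairing_cauchy_schwarz (Posz \o b) (Posz \o weight k).
have -> : pairing (Posz \o b) (Posz \o b) = normsq b by [].
rewrite !pairing_weight //= nb ltz_nat weight_diag_gt0 // => /(_ isT).
lia.
Qed.

End CartanPairing.

(** * Positive roots, strata and the graphs H_s as finite data *)

Definition sqsum (b : vec) : nat :=
  b 1 * b 1 + b 2 * b 2 + b 3 * b 3 + b 4 * b 4
  + b 5 * b 5 + b 6 * b 6 + b 7 * b 7 + b 8 * b 8.

Definition adjsum (b : vec) : nat :=
  b 1 * b 3 + b 3 * b 4 + b 4 * b 5 + b 5 * b 6
  + b 6 * b 7 + b 7 * b 8 + b 2 * b 4.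

Lemma normsqE b : normsq b = (2 * (sqsum b)%:Z - 2 * (adjsum b)%:Z)%R.
Proof. by rewrite /normsq /sqsum /adjsum unlock /= /Defs.form /= !PoszD !PoszM; ring. Qed.

Definition norm2 (b : vec) : bool := sqsum b == adjsum b + 1.

Lemma normsq_eq2 b : normsq b = 2%R <-> norm2 b.
Proof. by rewrite normsqE; split => [|/eqP] e; [apply/eqP|]; lia. Qed.

Lemma pos_rootP b : supported b -> pos_root b <-> norm2 b.
Proof.
move=> sb; split=> [[_ [_ /normsq_eq2 //]] | nb]; split=> //; split; last exact/normsq_eq2.
have /hasP[i _ bi] : has (fun i => b i != 0) (iota 1 8).
  apply: contraLR nb; rewrite -all_predC => /allP b0.
  have z i : i \in iota 1 8 -> b i = 0 by move/b0/negPn/eqP.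
  by rewrite /norm2 /sqsum /adjsum !z.
by exists i.
Qed.

(* Position 0 of a coefficient list is a dummy 0, so that [b i] sits at index [i]. *)
Definition coeffs (b : vec) : seq nat := [seq b i | i <- iota 0 9].
Definition of_coeffs (t : seq nat) : vec := nth 0 t.

Lemma size_coeffs b : size (coeffs b) = 9.
Proof. by rewrite size_map size_iota. Qed.

Lemma nth_coeffs b i : i < 9 -> nth 0 (coeffs b) i = b i.
Proof. by move=> i9; rewrite (nth_map 0) ?size_iota // nth_iota. Qed.

Lemma coeffsK b : supported b -> of_coeffs (coeffs b) = b.
Proof.
move=> sb; apply: functional_extensionality => i; rewrite /of_coeffs.
case: (ltnP i 9) => i9; first by rewrite nth_coeffs.
by rewrite nth_default ?size_coeffs // sb // i9 orbT.
Qed.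

Lemma of_coeffsK t : size t = 9 -> coeffs (of_coeffs t) = t.
Proof. by move=> st; rewrite /coeffs -{2}(mkseq_nth 0 t) st. Qed.

Section Box.

Variable T : eqType.

Fixpoint box (rs : seq (seq T)) : seq (seq T) :=
  if rs is r :: rs' then [seq x :: t | x <- r, t <- box rs'] else [:: [::]].

Lemma mem_box rs t : (t \in box rs) = all2 (fun x r => x \in r) t rs.
Proof.
elim: rs t => [|r rs IH] [|x t] //=.
  by apply/negP => /allpairsP[[y u] []].
apply/allpairsP/andP => [[[y u] [/= yr ub [-> ->]]]|[xr tb]].
  by rewrite -IH.
by exists (x, t); rewrite /= IH.
Qed.

Lemma box_uniq rs : all uniq rs -> uniq (box rs).
Proof.
elim: rs => [|r rs IH] //= /andP[ur urs].
by apply: allpairs_uniq => //; [exact: IH | move=> [x t] [y u] _ _ [-> ->]].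
Qed.

End Box.

Definition coeff_range (k : nat) : seq nat :=
  if k == 0 then [:: 0] else [seq x <- iota 0 (2 * weight k k).+1 | x * x <= 2 * weight k k].

Definition roots : seq (seq nat) :=
  [seq t <- box [seq coeff_range k | k <- iota 0 9] | norm2 (of_coeffs t)].

Lemma roots_uniq : uniq roots.
Proof.
apply/filter_uniq/box_uniq; rewrite all_map; apply/allP => k _ /=.
by rewrite /coeff_range; case: eqP => // _; apply/filter_uniq/iota_uniq.
Qed.

Lemma mem_roots t : t \in roots -> size t = 9 /\ pos_root (of_coeffs t).
Proof.
rewrite mem_filter mem_box => /andP[nt]; case: t nt => [//|x t] nt /= /andP[].
rewrite mem_seq1 all2E => /eqP x0 /andP[/eqP /= st _].
rewrite st; split=> //.
have sx : supported (of_coeffs (x :: t)).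
  by move=> [_ | i /= i8]; rewrite /of_coeffs //= nth_default // st.
exact/(pos_rootP sx).
Qed.

Lemma coeffs_roots b : pos_root b -> coeffs b \in roots.
Proof.
move=> rb; have [sb [_ nb]] := rb.
rewrite mem_filter coeffsK // (normsq_eq2 b).1 // mem_box all2E !size_map eqxx.
rewrite zip_map all_map; apply/allP => k; rewrite mem_iota => /andP[_ k9] /=.
rewrite /coeff_range; case: eqP => [-> | /eqP k0]; first by rewrite mem_seq1 sb.
have bk := root_coeff_sq_le (_ : 0 < k <= 8) nb.
rewrite mem_filter mem_iota bk //=; nia.
Qed.

Definition mvalb (b : vec) (s : nat) : bool :=
  (b s != 0) && all (fun i => b i == 0) (iota s.+1 (8 - s)).

Lemma mvalP b s : supported b -> reflect (mval b s) (mvalb b s).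
Proof.
move=> sb; apply: (iffP andP) => -[bs z]; split=> //.
  move=> i si; case: (ltnP 8 i) => i8; first by rewrite sb ?i8 ?orbT.
  by apply/eqP/(allP z); rewrite mem_iota; lia.
by apply/allP => i; rewrite mem_iota => /andP[/z -> _].
Qed.

Definition stratumb (s : nat) (b : vec) : bool :=
  if s == 3 then mvalb b 2 || mvalb b 3 else mvalb b s.

Lemma stratumP s b : supported b -> stratum s b <-> pos_root b /\ stratumb s b.
Proof.
move=> sb; rewrite /stratum /stratumb; case: (s == 3); split=> -[rb m]; split=> //.
- by case: m => /(mvalP _ sb) ->; rewrite ?orbT.
- by case/orP: m => /(mvalP _ sb); [left | right].
- exact/(mvalP _ sb).
- exact/(mvalP _ sb).
Qed.

Definition stratum_list (s : nat) : seq (seq nat) :=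
  [seq t <- roots | stratumb s (of_coeffs t)].

Lemma mem_stratum_list s t : t \in stratum_list s -> size t = 9 /\ stratum s (of_coeffs t).
Proof.
rewrite mem_filter => /andP[m /mem_roots[st rt]]; split=> //.
by apply/(stratumP _ rt.1).
Qed.

Lemma coeffs_stratum_list s b : stratum s b -> coeffs b \in stratum_list s.
Proof.
move=> sb; have [rb m] := (stratumP s sb.1.1).1 sb.
by rewrite mem_filter coeffsK ?m ?coeffs_roots //; case: rb.
Qed.

Definition diff_simpleb (b b' : vec) : bool :=
  has (fun k => all (fun i => b i == b' i + (i == k)) (iota 0 9)) (iota 1 8).

Lemma diff_simpleP b b' :
  supported b -> supported b' -> reflect (diff_simple b b') (diff_simpleb b b').
Proof.
move=> sb sb'; apply: (iffP hasP) => [[k] | [k k18 e]].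
  rewrite mem_iota => k18 /allP e; exists k; first lia.
  move=> i; case: (ltnP i 9) => i9; first by apply/eqP/e; rewrite mem_iota.
  have -> : (i == k) = false by apply/eqP; lia.
  by rewrite sb ?sb' ?i9 ?orbT.
exists k; first by rewrite mem_iota; lia.
by apply/allP => i _; rewrite e.
Qed.

Definition hasse_adj (b b' : vec) : bool := diff_simpleb b b' || diff_simpleb b' b.

Lemma H_adjP b b' : supported b -> supported b' -> reflect (H_adj b b') (hasse_adj b b').
Proof.
move=> sb sb'; apply: (iffP orP) => -[/(diff_simpleP sb sb') | /(diff_simpleP sb' sb)];
  by [left | right].
Qed.

Definition hasse_table (V : seq (seq nat)) : seq (seq nat) :=
  [seq [seq k <- iota 0 (size V)
          | hasse_adj (of_coeffs (nth [::] V i)) (of_coeffs (nth [::] V k))]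
     | i <- iota 0 (size V)].

Lemma size_hasse_table V : size (hasse_table V) = size V.
Proof. by rewrite size_map size_iota. Qed.

Lemma mem_hasse_table V i k : i < size V ->
  (k \in nth [::] (hasse_table V) i)
    = (k < size V) && hasse_adj (of_coeffs (nth [::] V i)) (of_coeffs (nth [::] V k)).
Proof.
by move=> iV; rewrite (nth_map 0) ?size_iota // nth_iota // mem_filter mem_iota andbC.
Qed.

Definition hasse_labellings (s : nat) : seq (seq nat) :=
  open_labellings (hasse_table (stratum_list s)) (iota 1 s) dyn_adj
    (index (coeffs (alpha s)) (stratum_list s)) s.

(** * Open maps H_s -> Dyn(E_s) as labellings of H_s *)

Section Stratum.

Variable s : nat.
Hypothesis s_range : 3 <= s <= 8.

Local Notation V := (stratum_list s).

Definition vertex (i : nat) : vec := of_coeffs (nth [::] V i).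
Definition vindex (b : vec) : nat := index (coeffs b) V.

Local Notation open_labelling_s :=
  (open_labelling (hasse_table V) (iota 1 s) dyn_adj (vindex (alpha s)) s).

Lemma stratum_vertex i : i < size V -> stratum s (vertex i).
Proof. by move=> iV; have [] := mem_stratum_list (mem_nth [::] iV). Qed.

Lemma stratum_list_uniq : uniq V.
Proof. exact: filter_uniq roots_uniq. Qed.

Lemma vindex_vertex i : i < size V -> vindex (vertex i) = i.
Proof.
move=> iV; have [st _] := mem_stratum_list (mem_nth [::] iV).
by rewrite /vindex /vertex (of_coeffsK st) (index_uniq _ iV stratum_list_uniq).
Qed.

Lemma vindex_lt b : stratum s b -> vindex b < size V.
Proof. by move=> sb; rewrite index_mem coeffs_stratum_list. Qed.

Lemma vertex_vindex b : stratum s b -> vertex (vindex b) = b.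
Proof.
move=> sb; rewrite /vertex nth_index ?coeffs_stratum_list // coeffsK //.
by case: sb => -[].
Qed.

Lemma stratum_alpha : stratum s (alpha s).
Proof.
have sa : supported (alpha s).
  by move=> i; rewrite /alpha; case: (i =P s) => // ->; lia.
apply/(stratumP _ sa); split; first apply/(pos_rootP sa).
all: by case/andP: s_range; case: (s) => [|[|[|[|[|[|[|[|[|?]]]]]]]]].
Qed.

Lemma mem_labels j : (j \in iota 1 s) = (1 <= j <= s).
Proof. by rewrite mem_iota add1n ltnS. Qed.

Lemma mem_hasse_nbrs i k : i < size V ->
  k \in nth [::] (hasse_table V) i <-> k < size V /\ H_adj (vertex i) (vertex k).
Proof.
move=> iV; rewrite (mem_hasse_table _ iV).
have sv j : j < size V -> supported (vertex j) by move=> /stratum_vertex[[]].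
split=> [/andP[kV ik] | [kV ik]].
  by split=> //; apply/(H_adjP (sv i iV) (sv k kV)).
by apply/andP; split=> //; apply/(H_adjP (sv i iV) (sv k kV)).
Qed.

Lemma good_h_open_labelling h : good_h s h -> open_labelling_s (h \o vertex).
Proof.
case=> h_range h_alpha hom sur; rewrite /open_labelling size_hasse_table; split=> /=.
- by move=> i /stratum_vertex /h_range; rewrite mem_labels.
- by rewrite (vertex_vindex stratum_alpha).
- move=> i k iV /(mem_hasse_nbrs _ iV) [kV ik].
  by have [] := hom _ _ (stratum_vertex iV) (stratum_vertex kV) ik.
move=> i j iV; rewrite mem_labels => j1s dj.
have sv := stratum_vertex iV.
have [b' [sb' ib' <-]] := sur _ sv j (And3 (h_range _ sv) j1s dj).
exists (vindex b'); last by rewrite /= (vertex_vindex sb').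
by apply/(mem_hasse_nbrs _ iV); rewrite (vertex_vindex sb'); split; first exact: vindex_lt.
Qed.

Lemma open_labelling_good_h f : open_labelling_s f -> good_h s (f \o vindex).
Proof.
rewrite /open_labelling size_hasse_table => -[f_range f_alpha hom sur]; split=> /=.
- by move=> b /vindex_lt /f_range; rewrite mem_labels.
- exact: f_alpha.
- move=> b b' sb sb' bb'; split; rewrite -?mem_labels; try exact/f_range/vindex_lt.
  apply: hom (vindex_lt sb) _; apply/(mem_hasse_nbrs _ (vindex_lt sb)).
  by rewrite (vertex_vindex sb) (vertex_vindex sb'); split; first exact: vindex_lt.
move=> b sb j [_ j1s dj]; rewrite -mem_labels in j1s.
have bV := vindex_lt sb.
have [k /(mem_hasse_nbrs _ bV) [kV bk] <-] := sur _ j bV j1s dj.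
exists (vertex k); split; [exact: stratum_vertex | | by rewrite /= vindex_vertex].
by rewrite vertex_vindex in bk.
Qed.

Lemma good_h_mem_labellings h :
  good_h s h -> mkseq (h \o vertex) (size V) \in hasse_labellings s.
Proof. by move=> /good_h_open_labelling /mkseq_open_labelling; rewrite size_hasse_table. Qed.

Lemma mem_labellings_good_h p : p \in hasse_labellings s -> good_h s (nth 0 p \o vindex).
Proof.
move=> pL; apply/open_labelling_good_h/(nth_open_labelling _ _ pL).
  by rewrite size_hasse_table; apply/vindex_lt/stratum_alpha.
by move=> i k; rewrite size_hasse_table => iV /(mem_hasse_nbrs _ iV) [].
Qed.

End Stratum.

Lemma hasse_labellings_single s : 3 <= s <= 7 -> exists p, hasse_labellings s = [:: p].
Proof.
move=> s37.
have sizes : all (fun s => size (hasse_labellings s) == 1) (iota 3 5) by vm_compute.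
have : size (hasse_labellings s) == 1 by apply: (allP sizes); rewrite mem_iota; lia.
by case: (hasse_labellings s) => [|p [|q L]] sz; [| exists p |].
Qed.

Lemma hasse_labellings8 : hasse_labellings 8 = [::].
Proof. by vm_compute. Qed.

Theorem mainTheorem12 :
  (forall s : nat, 3 <= s <= 7 ->
     exists h : vec -> nat,
       good_h s h /\
       forall h' : vec -> nat, good_h s h' -> forall b, stratum s b -> h' b = h b)
  /\ ~ (exists h : vec -> nat, good_h 8 h).
Proof.
split=> [s s37 | [h gh]].
  have s38 : 3 <= s <= 8 by lia.
  have [p Lp] := hasse_labellings_single s37.
  exists (nth 0 p \o vindex s); split.
    by apply: (mem_labellings_good_h s38); rewrite Lp mem_seq1.
  move=> h' gh' b sb; have := good_h_mem_labellings s38 gh'.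
  rewrite Lp mem_seq1 => /eqP <- /=.
  by rewrite nth_mkseq ?vindex_lt //= vertex_vindex.
by have := good_h_mem_labellings (isT : 3 <= 8 <= 8) gh; rewrite hasse_labellings8.
Qed.
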